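(* Assume Assumption A2 and Assumption A1(p) for some $p\ge1$ (see context), and let $0<\eta_s\le\eta_{\infty,p}$ for all $s$. Then for every $t\ge1$, \[\|\rho^{\mathrm{avg}}_t\|\le\frac{\eta_t^2H_t^2}{2}\zeta_1\zeta_2,\qquad\text{where }\ \rho^{\mathrm{avg}}_t=\frac1N\sum_{c=1}^N\big(I-(I-\eta_t\bar{\mathbf A}^c)^{H_t}\big)(\theta^c_\star-\theta_\star).\]
   Context: Setting: $N$ agents, dimension $d$. For each agent $c$: distribution $\pi_c$ on $(\mathsf Z,\mathcal Z)$, measurable $\mathbf A^c:\mathsf Z\to\mathbb R^{d\times d}$, $\mathbf b^c:\mathsf Z\to\mathbb R^d$, $\bar{\mathbf A}^c=\mathbb E_{\pi_c}[\mathbf A^c(Z)]$, $\bar{\mathbf b}^c=\mathbb E_{\pi_c}[\mathbf b^c(Z)]$, $\bar{\mathbf A}=N^{-1}\sum_c\bar{\mathbf A}^c$; $\theta_\star$ solves $\bar{\mathbf A}\theta_\star=N^{-1}\sum_c\bar{\mathbf b}^c$; $\theta^c_\star$ solves $\bar{\mathbf A}^c\theta^c_\star=\bar{\mathbf b}^c$; $\varepsilon^c(z)=(\mathbf A^c(z)-\bar{\mathbf A}^c)\theta^c_\star-(\mathbf b^c(z)-\bar{\mathbf b}^c)$. Assumption A1(p): each $-\bar{\mathbf A}^c$ Hurwitz; there exist $a>0,\eta_{\infty,p}>0$, $\eta_{\infty,p}a\le1/2$, with $\mathbb E^{1/p}_{Z\sim\pi_c}[\|(I-\eta\mathbf A^c(Z))u\|^p]\le(1-\eta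 a)\|u\|$ for all $0<\eta<\eta_{\infty,p}$, $u$. Assumption A2: samples i.i.d. per agent and independent; $\max_c\sup_z\|\varepsilon^c(z)\|<\infty$, $\max_c\sup_z\max(\|\mathbf A^c(z)\|,\|\mathbf A^c(z)-\bar{\mathbf A}^c\|)<\infty$. $H_t\in\mathbb N$ are the local step numbers. $\zeta_1^2=N^{-1}\sum_c\|\bar{\mathbf A}^c(\theta^c_\star-\theta_\star)\|^2$, $\zeta_2^2=N^{-1}\sum_c\|\bar{\mathbf A}^c-\bar{\mathbf A}\|^2$. *)

From HB Require Import structures.
From mathcomp Require Import all_boot all_order all_algebra.
From mathcomp Require Import complex.
From mathcomp Require Import all_classical all_reals all_analysis.
Set Implicit Arguments. Unset Strict Implicit. Unset Printing Implicit Defensive.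
Import Order.TTheory GRing.Theory Num.Theory.
Local Open Scope ring_scope.
Local Open Scope classical_set_scope.

Section Defs.
Variable R : realType.

Definition vnorm (d : nat) (v : 'cV[R]_d) : R :=
  Num.sqrt (\sum_(i < d) (v i ord0) ^+ 2).

Definition opnorm (d : nat) (M : 'M[R]_d) : R :=
  sup [set r : R | exists u : 'cV[R]_d, vnorm u <= 1 /\ r = vnorm (M *m u)].

Definition hurwitz (d : nat) (M : 'M[R]_d) : Prop :=
  forall z : R[i],
    root (map_poly (fun x : R => Complex x 0) (char_poly M)) z -> complex.Re z < 0.

Definition mexp (dm : measure_display) (Z : measurableType dm)
    (P : probability Z R) (m n : nat) (F : Z -> 'M[R]_(m, n)) : 'M[R]_(m, n) :=
  \matrix_(i, j) fine (\int[P]_z (F z i j)%:E).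

End Defs.

(* Write X_c = I - eta A_c and Y = I - eta A for the averaged matrix A.  Since
   I - X_c^H = eta (sum_{j<H} X_c^j) A_c and the drifts g_c = A_c (theta_c - theta_star)
   sum to zero (both parameters solve their linear systems), the bias is
   rho = (eta / N) sum_c sum_{j<H} (X_c^j - Y^j) g_c.  Assumption A1 combined with
   |E v| <= E |v| <= (E |v|^p)^(1/p) makes every X_c, hence their average Y,
   nonexpansive, and then |X_c^j - Y^j| <= j |X_c - Y| = j eta |A_c - A| by
   telescoping.  Summing over j < H gives H^2 / 2, and Cauchy-Schwarz over the
   agents gives zeta1 zeta2. *)

From HB Require Import structures.
From mathcomp Require Import all_boot all_order all_algebra.
From mathcomp Require Import complex.
From mathcomp Require Import all_classical all_reals all_analysis.
From mathcomp Require Import measurable_realfun.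
From mathcomp Require Import ring lra.
Set Implicit Arguments.
Unset Strict Implicit.
Unset Printing Implicit Defensive.
Import Order.TTheory GRing.Theory Num.Theory.
Local Open Scope ring_scope.
Local Open Scope classical_set_scope.

Section EuclideanNorm.
Variable R : realType.

Let sumr_sqr_ge0 (I : finType) (x : I -> R) : 0 <= \sum_i x i ^+ 2.
Proof. by rewrite sumr_ge0// => i _; rewrite sqr_ge0. Qed.

Lemma sum_mul_sqr_le (I : finType) (x y : I -> R) :
  (\sum_i x i * y i) ^+ 2 <= (\sum_i x i ^+ 2) * (\sum_i y i ^+ 2).
Proof.
set X := \sum_i x i ^+ 2; set Y := \sum_i y i ^+ 2; set S := \sum_i x i * y i.
have [X_eq0|X_neq0] := eqVneq X 0.
  have x0 i : x i = 0.
    by apply/eqP; rewrite -sqrf_eq0; apply/eqP/(psumr_eq0P _ X_eq0) => // j _; rewrite sqr_ge0.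
  by rewrite /S big1 ?expr0n ?X_eq0 ?mul0r// => i _; rewrite x0 mul0r.
have X_gt0 : 0 < X by rewrite lt_neqAle eq_sym X_neq0 sumr_sqr_ge0.
(* the quadratic [t |-> \sum_i (t x_i - y_i)^2] is minimal at [t = S / X] *)
have := sumr_sqr_ge0 (fun i => x i * (S / X) - y i).
have -> : \sum_i (x i * (S / X) - y i) ^+ 2 = Y - S ^+ 2 / X.
  have -> : Y - S ^+ 2 / X = (S / X) ^+ 2 * X - 2 * (S / X) * S + Y.
    by field; rewrite X_neq0.
  rewrite /X /Y /S !mulr_sumr -sumrB -big_split /=; apply: eq_bigr => i _; ring.
by rewrite subr_ge0 ler_pdivrMr// mulrC.
Qed.

Lemma normr_sum_mul_le (I : finType) (x y : I -> R) :
  `|\sum_i x i * y i| <= Num.sqrt (\sum_i x i ^+ 2) * Num.sqrt (\sum_i y i ^+ 2).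
Proof.
by rewrite -sqrtrM ?sumr_sqr_ge0// -sqrtr_sqr ler_sqrt ?sum_mul_sqr_le ?mulr_ge0 ?sumr_sqr_ge0.
Qed.

Variable d : nat.
Implicit Types (u v : 'cV[R]_d) (M : 'M[R]_d).

Definition vdot u v := \sum_i u i ord0 * v i ord0.

Lemma vnorm_ge0 v : 0 <= vnorm v.
Proof. exact: sqrtr_ge0. Qed.

Lemma vnorm_sqr v : vnorm v ^+ 2 = vdot v v.
Proof. by rewrite sqr_sqrtr ?sumr_sqr_ge0. Qed.

Lemma vdot_le u v : vdot u v <= vnorm u * vnorm v.
Proof.
exact: le_trans (ler_norm _) (normr_sum_mul_le _ _).
Qed.

Lemma normr_coord_le v i : `|v i ord0| <= vnorm v.
Proof.
rewrite -sqrtr_sqr ler_sqrt ?sumr_sqr_ge0// (bigD1 i)//= lerDl.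
by rewrite sumr_ge0// => j _; rewrite sqr_ge0.
Qed.

Lemma vnorm_eq0 v : vnorm v = 0 -> v = 0.
Proof.
move=> v0; apply/matrixP => i j; rewrite (ord1 j) mxE; apply/eqP.
by rewrite -normr_le0 -v0 normr_coord_le.
Qed.

Lemma vnormZ k v : vnorm (k *: v) = `|k| * vnorm v.
Proof.
rewrite /vnorm -sqrtr_sqr -sqrtrM ?sqr_ge0// mulr_sumr.
by congr Num.sqrt; apply: eq_bigr => i _; rewrite mxE exprMn.
Qed.

Lemma vnorm0 : vnorm (0 : 'cV[R]_d) = 0.
Proof. by rewrite -(scale0r 0) vnormZ normr0 mul0r. Qed.

Lemma vnormN v : vnorm (- v) = vnorm v.
Proof. by rewrite -scaleN1r vnormZ normrN1 mul1r. Qed.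

Lemma vnormD u v : vnorm (u + v) <= vnorm u + vnorm v.
Proof.
rewrite -ler_sqr ?nnegrE ?addr_ge0 ?vnorm_ge0// sqrrD !vnorm_sqr.
have -> : vdot (u + v) (u + v) = vdot u u + 2 * vdot u v + vdot v v.
  rewrite /vdot mulr_sumr -!big_split /=; apply: eq_bigr => i _; rewrite !mxE; ring.
by rewrite lerD2r lerD2l mulr2n mulrDl mul1r lerD ?vdot_le.
Qed.

Lemma vnorm_sum I (r : seq I) (P : pred I) (F : I -> 'cV[R]_d) :
  vnorm (\sum_(i <- r | P i) F i) <= \sum_(i <- r | P i) vnorm (F i).
Proof.
elim/big_ind2: _ => [|x1 x2 y1 y2 le1 le2|//]; first by rewrite vnorm0.
exact: le_trans (vnormD _ _) (lerD le1 le2).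
Qed.

Lemma vnorm_mulmx_le_frobenius M v :
  vnorm (M *m v) <= Num.sqrt (\sum_i \sum_j M i j ^+ 2) * vnorm v.
Proof.
rewrite -sqrtrM; last by rewrite sumr_ge0// => i _; exact: sumr_sqr_ge0.
rewrite ler_sqrt; last first.
  by rewrite mulr_ge0 ?sumr_sqr_ge0// sumr_ge0// => i _; exact: sumr_sqr_ge0.
rewrite mulr_suml; apply: ler_sum => i _; rewrite mxE.
exact: sum_mul_sqr_le.
Qed.

End EuclideanNorm.

Section OperatorNorm.
Variables (R : realType) (d : nat).
Implicit Types (u v : 'cV[R]_d) (M : 'M[R]_d).

Let opnorm_has_sup M :
  has_sup [set r : R | exists u : 'cV[R]_d, vnorm u <= 1 /\ r = vnorm (M *m u)].
Proof.
split; first by exists 0, 0; rewrite vnorm0 mulmx0 vnorm0.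
exists (Num.sqrt (\sum_i \sum_j M i j ^+ 2)) => _ [u [u1 ->]].
apply: le_trans (vnorm_mulmx_le_frobenius M u) _.
by rewrite ler_piMr ?sqrtr_ge0.
Qed.

Lemma opnorm_ge0 M : 0 <= opnorm M.
Proof.
by apply: (sup_upper_bound (opnorm_has_sup M)); exists 0; rewrite vnorm0 mulmx0 vnorm0.
Qed.

Lemma vnorm_mulmx_le M v : vnorm (M *m v) <= opnorm M * vnorm v.
Proof.
have [/vnorm_eq0 ->|v_neq0] := eqVneq (vnorm v) 0; first by rewrite mulmx0 !vnorm0 mulr0.
have v_gt0 : 0 < vnorm v by rewrite lt_neqAle eq_sym v_neq0 vnorm_ge0.
rewrite -ler_pdivrMr// mulrC; apply: (sup_upper_bound (opnorm_has_sup M)).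
exists ((vnorm v)^-1 *: v); rewrite -scalemxAr !vnormZ ger0_norm ?invr_ge0 ?vnorm_ge0//.
by rewrite mulVf.
Qed.

Lemma normr_entry_le_opnorm M i j : `|M i j| <= opnorm M.
Proof.
have e_j1 : vnorm (delta_mx j 0 : 'cV[R]_d) = 1.
  rewrite /vnorm (bigD1 j)//= big1 ?mxE ?eqxx ?expr1n ?addr0 ?sqrtr1// => k /negbTE k_neq_j.
  by rewrite mxE k_neq_j expr0n.
have := vnorm_mulmx_le M (delta_mx j 0); rewrite e_j1 mulr1 -colE.
by apply: le_trans; have := normr_coord_le (col j M) i; rewrite mxE.
Qed.

Lemma subIZ_mulmx_coord M (e : R) v i :
  ((1%:M - e *: M) *m v) i ord0 = v i ord0 + \sum_j (- e * v j ord0) * M i j.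
Proof.
rewrite mulmxBl mul1mx -scalemxAl !mxE mulr_sumr -sumrN; congr (_ + _).
by apply: eq_bigr => j _; ring.
Qed.

End OperatorNorm.

Section Nonexpansive.
Variables (R : realType) (d : nat).
Implicit Types (u v : 'cV[R]_d) (B X Y : 'M[R]_d).

Definition nonexpansive B := forall u, vnorm (B *m u) <= vnorm u.

Lemma nonexpansiveX Y j : nonexpansive Y -> nonexpansive (Y ^+ j).
Proof.
move=> Y1; elim: j => [|j IH] u; first by rewrite expr0 -idmxE mul1mx.
by rewrite exprS -mulmxE -mulmxA; apply: le_trans (Y1 _) (IH u).
Qed.

Lemma nonexpansive_avg N (X : 'I_N -> 'M[R]_d) : (0 < N)%N ->
  (forall c, nonexpansive (X c)) -> nonexpansive (N%:R^-1 *: \sum_c X c).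
Proof.
move=> N_gt0 X1 u; rewrite -scalemxAl mulmx_suml vnormZ ger0_norm ?invr_ge0//.
rewrite ler_pdivrMl ?ltr0n//; apply: le_trans (vnorm_sum _ _ _) _.
by apply: le_trans (ler_sum _ (fun c _ => X1 c u)) _; rewrite sumr_const card_ord mulr_natl.
Qed.

Lemma vnorm_mulmx_expB_le X Y (k : R) j v : 0 <= k ->
  nonexpansive X -> nonexpansive Y -> (forall u, vnorm ((X - Y) *m u) <= k * vnorm u) ->
  vnorm ((X ^+ j - Y ^+ j) *m v) <= j%:R * k * vnorm v.
Proof.
move=> k_ge0 X1 Y1 XY; elim: j v => [|j IH] v.
  by rewrite !expr0 subrr mul0mx vnorm0 !mul0r.
have -> : X ^+ j.+1 - Y ^+ j.+1 = X * (X ^+ j - Y ^+ j) + (X - Y) * Y ^+ j.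
  by rewrite !exprS mulrBr mulrBl addrA subrK.
rewrite mulmxDl -!mulmxE -!mulmxA; apply: le_trans (vnormD _ _) _.
rewrite -[j.+1]addn1 natrD mulrDl mul1r mulrDl.
apply: lerD; first exact: le_trans (X1 _) (IH v).
exact: le_trans (XY _) (ler_wpM2l k_ge0 (nonexpansiveX j Y1 v)).
Qed.

Lemma vnorm_subIZ_sqr B e u : vnorm ((1%:M - e *: B) *m u) ^+ 2 =
  vnorm u ^+ 2 - 2 * e * vdot u (B *m u) + e ^+ 2 * vnorm (B *m u) ^+ 2.
Proof.
rewrite !vnorm_sqr /vdot mulmxBl mul1mx -scalemxAl !mulr_sumr -sumrB -big_split /=.
by apply: eq_bigr => i _; rewrite !mxE; ring.
Qed.

Lemma nonexpansive_subIZ_closed B e0 :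
  (forall e, 0 < e < e0 -> nonexpansive (1%:M - e *: B)) ->
  forall e, 0 < e <= e0 -> nonexpansive (1%:M - e *: B).
Proof.
move=> small e /andP[e_gt0]; rewrite le_eqVlt => /predU1P[e_eq|e_lt]; last first.
  by apply: small; rewrite e_gt0.
move: e_gt0; rewrite {}e_eq => e0_gt0 u.
set al := vdot u (B *m u); set be := vnorm (B *m u) ^+ 2.
(* [|(1 - e B) u|^2 - |u|^2 = e (e be - 2 al)], so for [e > 0] nonexpansiveness
   reads [e be <= 2 al], a condition that passes to the limit [e = e0]. *)
have small_be e1 : 0 < e1 < e0 -> e1 * be <= 2 * al.
  move=> /andP[e1_gt0 e1_lt]; have := small e1; rewrite e1_gt0 e1_lt => /(_ isT u) le_u.
  rewrite -ler_sqr ?nnegrE ?vnorm_ge0// vnorm_subIZ_sqr -/al -/be in le_u.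
  by rewrite -(ler_pM2l e1_gt0); lra.
have be_ge0 : 0 <= be := sqr_ge0 _.
have al_ge0 : 0 <= al.
  have := small_be (e0 / 2); rewrite divr_gt0// ltr_pdivrMr// ltr_pMr// ltr1n => /(_ isT).
  by have := mulr_ge0 (divr_ge0 (ltW e0_gt0) (ler0n _ 2)) be_ge0; lra.
rewrite -ler_sqr ?nnegrE ?vnorm_ge0// vnorm_subIZ_sqr -/al -/be.
suff : e0 * be <= 2 * al by move=> le_al; rewrite -(ler_pM2l e0_gt0) in le_al; lra.
move: be_ge0; rewrite le_eqVlt => /predU1P[<-|be_gt0]; first by rewrite mulr0 mulr_ge0.
rewrite -ler_pdivlMr// leNgt; apply/negP => /midf_lt[gt_mid lt_mid].
have mid_gt0 : 0 < (2 * al / be + e0) / 2.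
  by apply: (le_lt_trans _ gt_mid); apply: divr_ge0 (ltW be_gt0); apply: mulr_ge0.
have := small_be _ (introT andP (conj mid_gt0 lt_mid)).
by rewrite -ler_pdivlMr// leNgt gt_mid.
Qed.

End Nonexpansive.

Section Rintegral_sum.
Context {dm : measure_display} {Z : measurableType dm} {R : realType}.
Variable mu : {measure set Z -> \bar R}.

Lemma Rintegral_sum (D : set Z) I (r : seq I) (P : pred I) (f : I -> Z -> R) :
  measurable D -> (forall i, P i -> mu.-integrable D (EFin \o f i)) ->
  \int[mu]_(z in D) (\sum_(i <- r | P i) f i z) = \sum_(i <- r | P i) \int[mu]_(z in D) f i z.
Proof.
move=> mD intf; elim: r => [|i r IH].
  by under eq_Rintegral do rewrite big_nil; rewrite big_nil Rintegral_cst// mul0r.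
rewrite big_cons -IH; case: ifP => Pi; last by apply: eq_Rintegral => z _; rewrite big_cons Pi.
under eq_Rintegral do rewrite big_cons Pi.
rewrite RintegralD ?intf//.
apply: eq_integrable (integrable_sum mD r intf) => // z _ /=.
by rewrite sumEFin.
Qed.

End Rintegral_sum.

Section Expectation.
Context {dm : measure_display} {Z : measurableType dm} {R : realType}.
Variable P : probability Z R.

Let P_setT : (P : {measure set Z -> \bar R}) setT = 1%E := probability_setT P.

Lemma bounded_integrable (f : Z -> R) M : measurable_fun setT f ->
  (forall z, `|f z| <= M) -> P.-integrable setT (EFin \o f).
Proof.
move=> mf f_le; apply: measurable_bounded_integrable => //.
  by rewrite (le_lt_trans (probability_le1 P measurableT)) ?ltry.
exists M; split; first exact: num_real.
by move=> x M_lt z _; apply: le_trans (f_le z) (ltW M_lt).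
Qed.

Lemma integrable_affine n c (k : 'I_n -> R) (f : 'I_n -> Z -> R) :
  (forall i, P.-integrable setT (EFin \o f i)) ->
  P.-integrable setT (EFin \o (fun z => c + \sum_i k i * f i z)).
Proof.
move=> intf; apply: eq_integrable (integrableD _ (finite_measure_integrable_cst _ c _)
  (integrable_sum _ (index_enum _) (fun i _ => integrableZl _ (k i) (intf i)))) => // z _.
by rewrite /= EFinD sumEFin.
Qed.

Lemma Rintegral_affine n c (k : 'I_n -> R) (f : 'I_n -> Z -> R) :
  (forall i, P.-integrable setT (EFin \o f i)) ->
  \int[P]_z (c + \sum_i k i * f i z) = c + \sum_i k i * \int[P]_z f i z.
Proof.
move=> intf; rewrite RintegralD//; last 2 first.
- exact: finite_measure_integrable_cst.
- by have := integrable_affine 0 k intf; apply: eq_integrable => // z _; rewrite /= add0r.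
rewrite Rintegral_cst// P_setT mulr1 Rintegral_sum// => [|i _].
  by congr (_ + _); apply: eq_bigr => i _; rewrite RintegralZl.
by apply: eq_integrable (integrableZl _ (k i) (intf i)) => // z _; rewrite /= EFinM.
Qed.

Lemma measurable_vnorm d (V : Z -> 'cV[R]_d) :
  (forall i, measurable_fun setT (fun z => V z i ord0)) ->
  measurable_fun setT (fun z => vnorm (V z)).
Proof.
move=> mV; apply: measurableT_comp (continuous_measurable_fun (@sqrt_continuous R)) _.
by apply: measurable_sum => i; exact: measurable_funM.
Qed.

Lemma mexpE m n (F : Z -> 'M[R]_(m, n)) i j : mexp P F i j = \int[P]_z F z i j.
Proof. by rewrite mxE. Qed.

Lemma mexp_subIZ_mulmx d (A : Z -> 'M[R]_d) e (u : 'cV[R]_d) :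
  (forall i j, P.-integrable setT (EFin \o (fun z => A z i j))) ->
  mexp P (fun z => (1%:M - e *: A z) *m u) = (1%:M - e *: mexp P A) *m u.
Proof.
move=> intA; apply/matrixP => i k; rewrite (ord1 k) subIZ_mulmx_coord mexpE.
under eq_Rintegral do rewrite subIZ_mulmx_coord.
rewrite Rintegral_affine//.
by congr (_ + _); apply: eq_bigr => j _; rewrite mexpE.
Qed.

Lemma vnorm_mexp_le d (V : Z -> 'cV[R]_d) :
  (forall i, P.-integrable setT (EFin \o (fun z => V z i ord0))) ->
  P.-integrable setT (EFin \o (fun z => vnorm (V z))) ->
  vnorm (mexp P V) <= \int[P]_z vnorm (V z).
Proof.
move=> intV int_nV; set w := mexp P V.
have le_w : vnorm w ^+ 2 <= vnorm w * \int[P]_z vnorm (V z).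
  have -> : vnorm w ^+ 2 = \int[P]_z (0 + \sum_i w i ord0 * V z i ord0).
    by rewrite Rintegral_affine// add0r vnorm_sqr; apply: eq_bigr => i _; rewrite {2}/w mexpE.
  rewrite -RintegralZl//; apply: le_Rintegral => //.
  - exact: integrable_affine.
  - by apply: eq_integrable (integrableZl _ (vnorm w) int_nV) => // z _; rewrite /= EFinM.
  - by move=> z _; rewrite add0r; exact: vdot_le.
have : 0 <= \int[P]_z vnorm (V z) by apply: Rintegral_ge0 => z _; exact: vnorm_ge0.
by have := vnorm_ge0 w; nra.
Qed.

Lemma Rintegral_le_powR (f : Z -> R) (p : R) : 1 <= p ->
  measurable_fun setT f -> (forall z, 0 <= f z) ->
  P.-integrable setT (fun z => (f z `^ p)%:E) ->
  \int[P]_z f z <= (\int[P]_z (f z `^ p)) `^ p^-1.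
Proof.
rewrite le_eqVlt => /predU1P[<-|p1] mf f0 ifp.
  under [in X in _ <= X]eq_Rintegral do rewrite powRr1 ?f0//.
  by rewrite invr1 powRr1 ?Rintegral_ge0.
have p0 : 0 < p := lt_trans ltr01 p1.
set q := p / (p - 1).
have q0 : 0 < q by rewrite divr_gt0// subr_gt0.
have pq : p^-1 + q^-1 = 1 by rewrite invf_div; field; rewrite gt_eqF// subr_gt0.
have := hoelder P mf (measurable_cst (1 : R)) p0 q0 pq.
rewrite Lnorm1 Lnorm_cst1 P_setT poweR1r mule1 unlock /=.
under eq_integral do rewrite mulr1 ger0_norm ?f0//.
under [in X in (_ <= X)%E -> _]eq_integral do rewrite ger0_norm ?f0//.
rewrite -(fineK (integrable_fin_num _ ifp))// poweR_EFin => hle.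
rewrite /Rintegral -lee_fin fineK//.
rewrite ge0_fin_numE ?(le_lt_trans hle) ?ltry//.
by apply: integral_ge0 => z _; rewrite lee_fin.
Qed.

Lemma nonexpansive_subIZ_mexp d (A : Z -> 'M[R]_d) (p a e0 : R) :
  (forall i j, measurable_fun setT (fun z => A z i j)) ->
  (exists M, forall z, opnorm (A z) <= M) -> 1 <= p -> 0 <= a ->
  (forall e u, 0 < e < e0 ->
    (\int[P]_z (vnorm ((1%:M - e *: A z) *m u) `^ p)) `^ p^-1 <= (1 - e * a) * vnorm u) ->
  forall e, 0 < e <= e0 -> nonexpansive (1%:M - e *: mexp P A).
Proof.
move=> mA [M A_le] p1 a_ge0 moment; apply: nonexpansive_subIZ_closed => e /andP[e_gt0 e_lt] u.
set v := fun z => (1%:M - e *: A z) *m u.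
have intA i j : P.-integrable setT (EFin \o (fun z => A z i j)).
  apply: bounded_integrable (mA i j) _ => z.
  exact: le_trans (normr_entry_le_opnorm _ i j) (A_le z).
have intv i : P.-integrable setT (EFin \o (fun z => v z i ord0)).
  by rewrite /v; under eq_fun do rewrite subIZ_mulmx_coord; exact: integrable_affine.
have mv : measurable_fun setT (fun z => vnorm (v z)).
  by apply: measurable_vnorm => i; apply/measurable_EFinP; case/integrableP: (intv i).
have v_le z : vnorm (v z) <= (1 + e * M) * vnorm u.
  rewrite /v mulmxBl mul1mx -scalemxAl; apply: le_trans (vnormD _ _) _.
  rewrite vnormN vnormZ ger0_norm ?(ltW e_gt0)// mulrDl mul1r lerD2l -mulrA.
  rewrite ler_wpM2l ?(ltW e_gt0)//.
  by apply: le_trans (vnorm_mulmx_le _ _) _; rewrite ler_wpM2r ?vnorm_ge0.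
have v_ge0 z : 0 <= vnorm (v z) := vnorm_ge0 _.
rewrite -mexp_subIZ_mulmx//; apply: le_trans (vnorm_mexp_le intv _) _.
  by apply: bounded_integrable mv _ => z; rewrite ger0_norm.
apply: le_trans (Rintegral_le_powR p1 mv v_ge0 _) _.
  apply: (bounded_integrable (M := ((1 + e * M) * vnorm u) `^ p)) => [|z].
    exact: measurableT_comp (measurable_powR p) mv.
  rewrite ger0_norm ?powR_ge0// (ge0_ler_powR (r := p) _ _ _ (v_le z)) ?nnegrE//.
  - by rewrite (le_trans ler01 p1).
  - exact: le_trans (v_ge0 z) (v_le z).
apply: le_trans (moment e u _) _; first by rewrite e_gt0.
by rewrite ler_piMl ?vnorm_ge0// lerBlDr lerDl mulr_ge0// ltW.
Qed.

End Expectation.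

Section HeterogeneityBias.
Variables (R : realType) (N d : nat).

Lemma subI_exp_mulmx (B : 'M[R]_d) e h (v : 'cV[R]_d) :
  (1%:M - (1%:M - e *: B) ^+ h) *m v = e *: \sum_(j < h) (1%:M - e *: B) ^+ j *m (B *m v).
Proof.
set X := 1%:M - e *: B.
have -> : 1%:M - X ^+ h = \sum_(j < h) X ^+ j * (1%:M - X).
  rewrite idmxE -opprB subrX1 -mulNr opprB mulr_sumr; apply: eq_bigr => j _.
  by rewrite mulrBl mulrBr mul1r mulr1 -exprS -exprSr.
rewrite /X subKr mulmx_suml scaler_sumr; apply: eq_bigr => j _.
by rewrite -mulmxE scalemxAr scalemxAl mulmxA.
Qed.

Lemma sum_natr_le_sqr_half h : \sum_(j < h) (j%:R : R) <= h%:R ^+ 2 / 2.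
Proof.
elim: h => [|h IH]; first by rewrite big_ord0 mulr_ge0 ?sqr_ge0 ?invr_ge0.
by rewrite big_ord_recr /= -[h.+1]addn1 natrD; lra.
Qed.

Lemma avg_mul_le (x y : 'I_N -> R) :
  N%:R^-1 * \sum_c x c * y c <=
  Num.sqrt (N%:R^-1 * \sum_c x c ^+ 2) * Num.sqrt (N%:R^-1 * \sum_c y c ^+ 2).
Proof.
rewrite !sqrtrM ?invr_ge0// mulrACA -expr2 sqr_sqrtr ?invr_ge0// ler_wpM2l ?invr_ge0//.
exact: le_trans (ler_norm _) (normr_sum_mul_le _ _).
Qed.

Lemma sum_mulmx_sub_solution_eq0 (Ab : 'I_N -> 'M[R]_d) (b theta_c : 'I_N -> 'cV[R]_d) theta :
  (0 < N)%N -> (N%:R^-1 *: \sum_c Ab c) *m theta = N%:R^-1 *: \sum_c b c ->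
  (forall c, Ab c *m theta_c c = b c) -> \sum_c Ab c *m (theta_c c - theta) = 0.
Proof.
move=> N_gt0 sol sol_c; under eq_bigr do rewrite mulmxBr sol_c.
rewrite sumrB -mulmx_suml; apply/eqP; rewrite subr_eq0 eq_sym; apply/eqP.
by apply: (scalerI (a := N%:R^-1)); rewrite ?invr_eq0 ?pnatr_eq0 -?lt0n// scalemxAl.
Qed.

Variables (Ab : 'I_N -> 'M[R]_d) (delta : 'I_N -> 'cV[R]_d) (e : R) (h : nat).

Lemma bias_decomposition : \sum_c Ab c *m delta c = 0 ->
  N%:R^-1 *: \sum_c (1%:M - (1%:M - e *: Ab c) ^+ h) *m delta c =
  (N%:R^-1 * e) *: \sum_c \sum_(j < h) (((1%:M - e *: Ab c) ^+ j -
     (1%:M - e *: (N%:R^-1 *: \sum_c Ab c)) ^+ j) *m (Ab c *m delta c)).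
Proof.
move=> drift0; rewrite -scalerA; congr (_ *: _).
under eq_bigr do rewrite subI_exp_mulmx.
rewrite -scaler_sumr; congr (_ *: _).
under [RHS]eq_bigr do (under eq_bigr do rewrite mulmxBl; rewrite sumrB).
rewrite sumrB [X in _ - X]exchange_big [X in _ - X]big1 ?subr0// => j _.
by rewrite -mulmx_sumr drift0 mulmx0.
Qed.

Lemma vnorm_bias_le : (0 < N)%N -> 0 <= e ->
  (forall c, nonexpansive (1%:M - e *: Ab c)) -> \sum_c Ab c *m delta c = 0 ->
  vnorm (N%:R^-1 *: \sum_c (1%:M - (1%:M - e *: Ab c) ^+ h) *m delta c) <=
  (e ^+ 2 * h%:R ^+ 2 / 2) *
  Num.sqrt (N%:R^-1 * \sum_c vnorm (Ab c *m delta c) ^+ 2) *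
  Num.sqrt (N%:R^-1 * \sum_c opnorm (Ab c - N%:R^-1 *: \sum_c Ab c) ^+ 2).
Proof.
move=> N_gt0 e_ge0 X1 drift0; rewrite bias_decomposition//.
set Abar := N%:R^-1 *: \sum_c Ab c.
set n := fun c => vnorm (Ab c *m delta c); set o := fun c => opnorm (Ab c - Abar).
have Y1 : nonexpansive (1%:M - e *: Abar).
  have -> : 1%:M - e *: Abar = N%:R^-1 *: \sum_c (1%:M - e *: Ab c).
    rewrite sumrB sumr_const card_ord scalerBr -scalerMnr scalerMnl -mulr_natr.
    by rewrite mulVf ?pnatr_eq0 -?lt0n// scale1r /Abar -scaler_sumr !scalerA mulrC.
  exact: nonexpansive_avg.
have XY c u : vnorm (((1%:M - e *: Ab c) - (1%:M - e *: Abar)) *m u) <= e * o c * vnorm u.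
  rewrite opprB addrC addrA subrK -scalerBr -opprB -scalemxAl mulNmx vnormZ vnormN.
  by rewrite ger0_norm// -mulrA ler_wpM2l// vnorm_mulmx_le.
have T_ge0 : 0 <= \sum_(j < h) (j%:R : R) by rewrite sumr_ge0.
have sum_le : vnorm (\sum_c \sum_(j < h) (((1%:M - e *: Ab c) ^+ j - (1%:M - e *: Abar) ^+ j)
    *m (Ab c *m delta c))) <= e * (\sum_(j < h) (j%:R : R)) * \sum_c n c * o c.
  apply: le_trans (vnorm_sum _ _ _) _; rewrite mulr_sumr; apply: ler_sum => c _.
  apply: le_trans (vnorm_sum _ _ _) _; rewrite mulrAC mulr_sumr; apply: ler_sum => j _.
  rewrite (_ : _ * _ * _ = j%:R * (e * o c) * n c); last by ring.
  by apply: vnorm_mulmx_expB_le => //; rewrite mulr_ge0 ?opnorm_ge0.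
rewrite vnormZ ger0_norm ?mulr_ge0 ?invr_ge0//.
apply: le_trans (ler_wpM2l (mulr_ge0 _ e_ge0) sum_le) _; first by rewrite invr_ge0.
rewrite [X in X <= _](_ : _ =
  e ^+ 2 * (\sum_(j < h) (j%:R : R)) * (N%:R^-1 * \sum_c n c * o c)); last by ring.
rewrite -[X in _ <= X]mulrA ler_pM ?mulr_ge0 ?sqr_ge0 ?invr_ge0 ?sumr_ge0 ?avg_mul_le//.
- by move=> c _; rewrite mulr_ge0 ?vnorm_ge0 ?opnorm_ge0.
- by rewrite -mulrA ler_wpM2l ?sqr_ge0 ?sum_natr_le_sqr_half.
Qed.

End HeterogeneityBias.

Theorem lemma2 (R : realType) (N d : nat) (dm : measure_display)
  (Z : measurableType dm) (pi : 'I_N -> probability Z R)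
  (A : 'I_N -> Z -> 'M[R]_d) (b : 'I_N -> Z -> 'cV[R]_d)
  (theta_star : 'cV[R]_d) (theta_c : 'I_N -> 'cV[R]_d)
  (p a eta_inf : R) (eta : nat -> R) (H : nat -> nat) (t : nat) :
  let Abar c := mexp (pi c) (A c) in
  let bbar c := mexp (pi c) (b c) in
  let Abar_avg := N%:R^-1 *: \sum_(c < N) Abar c in
  let bbar_avg := N%:R^-1 *: \sum_(c < N) bbar c in
  let eps c z := (A c z - Abar c) *m theta_c c - (b c z - bbar c) in
  let zeta1 := Num.sqrt (N%:R^-1 *
      \sum_(c < N) vnorm (Abar c *m (theta_c c - theta_star)) ^+ 2) in
  let zeta2 := Num.sqrt (N%:R^-1 *
      \sum_(c < N) opnorm (Abar c - Abar_avg) ^+ 2) in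
  let rho := N%:R^-1 *: \sum_(c < N)
      ((1%:M - (1%:M - eta t *: Abar c) ^+ H t) *m (theta_c c - theta_star)) in
  (0 < N)%N ->
  (* theta_star and theta_c solve the defining linear systems *)
  Abar_avg *m theta_star = bbar_avg ->
  (forall c, Abar c *m theta_c c = bbar c) ->
  (* Assumption A2 (measurability and uniform boundedness) *)
  (forall c i j, measurable_fun [set: Z] (fun z => A c z i j)) ->
  (forall c i j, measurable_fun [set: Z] (fun z => b c z i j)) ->
  (exists M : R, forall c z,
      vnorm (eps c z) <= M /\ opnorm (A c z) <= M /\
      opnorm (A c z - Abar c) <= M) ->
  (* Assumption A1(p) *)
  1 <= p ->
  (forall c, hurwitz (- Abar c)) ->
  0 < a -> 0 < eta_inf -> eta_inf * a <= 1 / 2 ->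
  (forall c (e : R) (u : 'cV[R]_d), 0 < e < eta_inf ->
      powR (fine (\int[pi c]_z
              ((powR (vnorm ((1%:M - e *: A c z) *m u)) p)%:E))) p^-1
        <= (1 - e * a) * vnorm u) ->
  (* step sizes *)
  (forall s, 0 < eta s <= eta_inf) ->
  (1 <= t)%N ->
  vnorm rho <= (eta t ^+ 2 * (H t)%:R ^+ 2 / 2) * zeta1 * zeta2.
Proof.
move=> Abar bbar Abar_avg bbar_avg eps zeta1 zeta2 rho N_gt0 sol_star sol_c mA _ [M A_le]
  p1 _ a_gt0 _ _ moment eta_le _.
have /andP[e_gt0 e_le] := eta_le t.
apply: vnorm_bias_le => //; first exact: ltW.
- move=> c; apply: (nonexpansive_subIZ_mexp (mA c) _ p1 (ltW a_gt0) (moment c)).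
    by exists M => z; case: (A_le c z) => _ [].
  by rewrite e_gt0 e_le.
- exact: sum_mulmx_sub_solution_eq0 sol_star sol_c.
Qed.
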